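(* Let $m>n$ be coprime positive integers. The orbit of $\Lambda_0=(m(n-1),\dots,m,0\,|\,0,n,\dots,n(m-1))$ under the Weyl groupoid action on $\mathbb Z^{n|m}$ contains $\Lambda_1=(0,1,\dots,n-1\,|\,0,1,\dots,m-1)$.
   Context: Elements of $\mathbb Z^{n|m}$ are written $(a_1,\dots,a_n|b_1,\dots,b_m)$, identified with $\sum_ia_i\epsilon_i-\sum_jb_j\delta_j$. The Weyl groupoid action is generated by the permutations of $a_1,\dots,a_n$ among themselves and of $b_1,\dots,b_m$ among themselves, and, for $\alpha=\epsilon_i-\delta_j$, by $\tau_\alpha:\Pi_\alpha\to\Pi_{-\alpha}$, $\Lambda\mapsto\Lambda+n\epsilon_i-m\delta_j$ (add $n$ to $a_i$ and $m$ to $b_j$), and $\tau_{-\alpha}=\tau_\alpha^{-1}$, where $\Pi_\alpha=\{a_i=b_j\}$ and $\Pi_{-\alpha}=\{a_i-b_j=n-m\}$. The orbit of $\Lambda_0$ is the set of elements reachable from $\Lambda_0$ by finite sequences of these operations, each applied on its domain. *)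

From HB Require Import structures.
From mathcomp Require Import all_boot all_order all_algebra all_fingroup.
From Stdlib Require Import Relations.
Set Implicit Arguments. Unset Strict Implicit. Unset Printing Implicit Defensive.
Import Order.TTheory GRing.Theory Num.Theory.
Local Open Scope ring_scope.

(* An element (a_1..a_n | b_1..b_m) of Z^{n|m}, identified with
   sum_i a_i eps_i - sum_j b_j delta_j. Indices are 0-based. *)
Definition Zsup (n m : nat) : Type := ({ffun 'I_n -> int} * {ffun 'I_m -> int})%type.

Inductive weyl_step (n m : nat) : Zsup n m -> Zsup n m -> Prop :=
| ws_perm_a (s : {perm 'I_n}) (a : {ffun 'I_n -> int}) (b : {ffun 'I_m -> int}) :
    weyl_step (a, b) ([ffun k => a (s k)], b)
| ws_perm_b (s : {perm 'I_m}) (a : {ffun 'I_n -> int}) (b : {ffun 'I_m -> int}) :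
    weyl_step (a, b) (a, [ffun k => b (s k)])
(* tau_alpha, alpha = eps_i - delta_j, defined on Pi_alpha = {a_i = b_j} *)
| ws_tau (i : 'I_n) (j : 'I_m) (a : {ffun 'I_n -> int}) (b : {ffun 'I_m -> int}) :
    a i = b j ->
    weyl_step (a, b)
      ([ffun k => if k == i then a k + n%:Z else a k],
       [ffun k => if k == j then b k + m%:Z else b k])
(* tau_{-alpha} = tau_alpha^{-1}, defined on Pi_{-alpha} = {a_i - b_j = n - m} *)
| ws_tau_inv (i : 'I_n) (j : 'I_m) (a : {ffun 'I_n -> int}) (b : {ffun 'I_m -> int}) :
    a i - b j = n%:Z - m%:Z ->
    weyl_step (a, b)
      ([ffun k => if k == i then a k - n%:Z else a k],
       [ffun k => if k == j then b k - m%:Z else b k]).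

Definition in_weyl_orbit (n m : nat) (L0 L : Zsup n m) : Prop :=
  clos_refl_trans (Zsup n m) (@weyl_step n m) L0 L.

Definition Lambda0 (n m : nat) : Zsup n m :=
  ([ffun k : 'I_n => (m * (n - 1 - k))%N%:Z], [ffun k : 'I_m => (n * k)%N%:Z]).

Definition Lambda1 (n m : nat) : Zsup n m :=
  ([ffun k : 'I_n => (k : nat)%:Z], [ffun k : 'I_m => (k : nat)%:Z]).

(* Let S be the numerical semigroup generated by n and m, and walk t = 0, 1, 2, ...
   through the integers.  At time t put a_r := r + n * #{gaps x < t of S, x = r mod n}
   and b_r likewise modulo m.  At time 0 this is Lambda_1.  When t is a gap, a_(t mod n)
   and b_(t mod m) both equal t, so they become t + n and t + m at time t + 1, which is
   precisely the domain of tau_(-alpha) for alpha = eps_(t mod n) - delta_(t mod m),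
   and tau_(-alpha) goes back to time t.  Once all gaps are passed (t >= mn), a_r is
   the least element of S congruent to r mod n, and these Apery elements are
   0, m, ..., (n-1)m; so the final state is Lambda_0 up to permutations of the a's
   and of the b's. *)

From mathcomp Require Import all_boot all_order all_algebra all_fingroup.
From mathcomp Require Import zify.
From Stdlib Require Import Relations.
Set Implicit Arguments.
Unset Strict Implicit.
Unset Printing Implicit Defensive.
Import GRing.Theory.

Lemma leq_addn_modn p x y : y %% p = x %% p -> x < y -> x + p <= y.
Proof.
move=> eq_mod lt_xy; have : p %| y - x by rewrite -eqn_mod_dvd 1?ltnW // eq_mod.
by move/dvdn_leq; rewrite subn_gt0 lt_xy; lia.
Qed.

Section GapLift.

Variables (S : pred nat) (p : nat).
Hypotheses (p_gt0 : 0 < p) (S_addp : forall x, S x -> S (x + p)).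

Definition apery y := S y && ((y < p) || ~~ S (y - p)).

Fixpoint gap_lift t r :=
  if t is t'.+1 then gap_lift t' r + (if ~~ S t' && (t' %% p == r) then p else 0)
  else r.

Definition settled t x := S x || (t <= x).

(* [y] is the least element of [settled t] in the class of [r] mod [p]: [settled t]
   is closed under [+ p], so it suffices that [y - p] is not in it. *)
Definition least_settled t r y :=
  [/\ y %% p = r, settled t y & (y < p) || ~~ settled t (y - p)].

Lemma S_addn_mul y k : S y -> S (y + k * p).
Proof.
elim: k => [|k IHk] Sy; first by rewrite addn0.
by rewrite mulSn addnCA addnC; apply/S_addp/IHk.
Qed.

Lemma S_leq_modn y x : S y -> y <= x -> y %% p = x %% p -> S x.
Proof.
move=> Sy le_yx eq_mod; have /dvdnP[k def_k] : p %| x - y.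
  by rewrite -eqn_mod_dvd // eq_mod.
suff -> : x = y + k * p by apply: S_addn_mul.
lia.
Qed.

Lemma least_settled_gap t y :
  least_settled t (t %% p) y -> ~~ S t -> y = t.
Proof.
case=> y_mod y_settled y_min nSt.
have le_yt : y <= t.
  rewrite leqNgt; apply/negP => /(leq_addn_modn y_mod) le_tpy.
  move: y_min; rewrite /settled.
  have -> : (y < p) = false by lia.
  have le_t_yp : t <= y - p by lia.
  by rewrite le_t_yp orbT.
apply/eqP; rewrite eqn_leq le_yt leqNgt; apply/negP => lt_yt.
have Sy : S y by move: y_settled; rewrite /settled leqNgt lt_yt orbF.
by case/negP: nSt; apply: S_leq_modn le_yt y_mod.
Qed.

Lemma settledS t x : settled t.+1 x -> settled t x.
Proof. by rewrite /settled => /orP[->//|/ltnW ->]; rewrite orbT. Qed.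

Lemma least_settled_gap_lift t r : r < p -> least_settled t r (gap_lift t r).
Proof.
move=> lt_rp; elim: t => [|t [y_mod y_settled y_min]] /=.
  by split; rewrite ?modn_small ?lt_rp // /settled orbT.
set y := gap_lift t r in y_mod y_settled y_min *.
case: ifP => [/andP[nSt /eqP t_mod]|y_kept].
  have -> : y = t by apply: least_settled_gap; rewrite ?t_mod.
  split; first by rewrite modnDr.
    by rewrite /settled (_ : t < t + p) ?orbT //; lia.
  by rewrite addnK /settled ltnn orbF nSt orbT.
rewrite addn0; split=> //.
  move: y_settled; rewrite /settled; case Sy: (S y) => //= le_ty.
  have [ty|ne_ty] := eqVneq t y; last by rewrite ltn_neqAle ne_ty le_ty.
  by move: y_kept; rewrite ty Sy y_mod eqxx.
by case/orP: y_min => [->//|ns]; apply/orP; right; apply: contraNN ns; apply: settledS.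
Qed.

Lemma gap_lift_modn t r : r < p -> gap_lift t r %% p = r.
Proof. by case/(least_settled_gap_lift t). Qed.

Lemma gap_lift_inj t : injective (fun k : 'I_p => gap_lift t k).
Proof.
by move=> k1 k2 /(congr1 (modn^~ p)); rewrite /= !gap_lift_modn // => /val_inj.
Qed.

Lemma gap_lift_gap t : ~~ S t -> gap_lift t (t %% p) = t.
Proof. by apply/least_settled_gap/least_settled_gap_lift/ltn_pmod. Qed.

Lemma gap_lift_apery t r :
  r < p -> p <= t -> (forall x, t - p <= x -> S x) -> apery (gap_lift t r).
Proof.
move=> lt_rp le_pt S_large.
case: (least_settled_gap_lift t lt_rp) => _ y_settled y_min.
set y := gap_lift t r in y_settled y_min *.
have Sy : S y.
  case/orP: y_settled => // le_ty.
  have S_yp : S (y - p) by apply: S_large; lia.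
  have le_py : p <= y by lia.
  by move: y_min; rewrite /settled S_yp ltnNge le_py.
rewrite /apery Sy; case/orP: y_min => [->//|].
by rewrite /settled negb_or => /andP[-> _]; rewrite orbT.
Qed.

End GapLift.

Definition in_semigroup2 p q x :=
  [exists i : 'I_x.+1, exists j : 'I_x.+1, x == p * i + q * j].

Lemma in_semigroup2P p q x : 0 < p -> 0 < q ->
  reflect (exists i j, x = p * i + q * j) (in_semigroup2 p q x).
Proof.
move=> p_gt0 q_gt0; apply: (iffP existsP) => [[i /existsP[j /eqP def_x]]|[i [j def_x]]].
  by exists i, j.
have lt_ix : i < x.+1 by nia.
have lt_jx : j < x.+1 by nia.
by exists (Ordinal lt_ix); apply/existsP; exists (Ordinal lt_jx); apply/eqP.
Qed.

Section Semigroup2.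

Variables p q : nat.
Hypotheses (p_gt0 : 0 < p) (q_gt0 : 0 < q).

Lemma in_semigroup2C : in_semigroup2 p q =1 in_semigroup2 q p.
Proof.
move=> x; apply/(in_semigroup2P _ p_gt0 q_gt0)/(in_semigroup2P _ q_gt0 p_gt0).
  by case=> i [j ->]; exists j, i; rewrite addnC.
by case=> i [j ->]; exists j, i; rewrite addnC.
Qed.

Lemma in_semigroup2_addl x : in_semigroup2 p q x -> in_semigroup2 p q (x + p).
Proof.
case/(in_semigroup2P _ p_gt0 q_gt0) => i [j ->]; apply/in_semigroup2P => //.
by exists i.+1, j; rewrite mulnS; lia.
Qed.

Lemma in_semigroup2_addr x : in_semigroup2 p q x -> in_semigroup2 p q (x + q).
Proof.
case/(in_semigroup2P _ p_gt0 q_gt0) => i [j ->]; apply/in_semigroup2P => //.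
by exists i, j.+1; rewrite mulnS; lia.
Qed.

Lemma in_semigroup2_large x : coprime p q -> (q - 1) * p <= x -> in_semigroup2 p q x.
Proof.
move=> co_pq le_x; apply/in_semigroup2P => //.
set z := chinese p q 0 x %% (p * q).
have z_modp : z %% p = 0.
  by rewrite modn_dvdm ?dvdn_mulr // chinese_modl // mod0n.
have z_modq : z %% q = x %% q by rewrite modn_dvdm ?dvdn_mull // chinese_modr.
have lt_z : z < p * q by rewrite ltn_pmod // muln_gt0 p_gt0.
have def_z : z = p * (z %/ p) by rewrite {1}(divn_eq z p) z_modp addn0 mulnC.
have lt_zq : z %/ p < q by rewrite ltn_divLR // mulnC.
have le_zx : z <= x.
  by rewrite def_z mulnC (leq_trans _ le_x) // leq_mul2r subn1 -ltnS prednK // lt_zq orbT.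
have /dvdnP[j def_j] : q %| x - z by rewrite -eqn_mod_dvd // z_modq.
by exists (z %/ p), j; rewrite -def_z mulnC -def_j addnC subnK.
Qed.

Lemma apery_semigroup2 y : apery (in_semigroup2 p q) p y -> exists2 j, j < p & y = q * j.
Proof.
case/andP => /(in_semigroup2P _ p_gt0 q_gt0)[i [j def_y]] y_min.
have y_subp_notin i' j' : y = p * i' + q * j' + p -> False.
  move=> def_y'; move: y_min; rewrite def_y' addnK ltnNge leq_addl /=.
  by case/negP; apply/in_semigroup2P => //; exists i', j'.
case: i def_y => [|i] def_y; last first.
  by exfalso; apply: (y_subp_notin i j); rewrite def_y mulnS; lia.
exists j; last by rewrite def_y muln0.
by rewrite ltnNge; apply/negP => le_pj; apply: (y_subp_notin (q - 1) (j - p)); nia.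
Qed.

End Semigroup2.

Lemma weyl_step_perm_a n m (a a' : {ffun 'I_n -> int}) (b : {ffun 'I_m -> int}) :
  injective a' -> (forall k, a' k \in codom a) -> weyl_step (a, b) (a', b).
Proof.
move=> inj_a' a'_in.
have f_inj : injective (fun k => iinv (a'_in k)).
  by move=> k1 k2 /(congr1 a); rewrite !f_iinv => /inj_a'.
have -> : a' = [ffun k => a (perm f_inj k)].
  by apply/ffunP => k; rewrite ffunE permE f_iinv.
exact: ws_perm_a.
Qed.

Lemma weyl_step_perm_b n m (a : {ffun 'I_n -> int}) (b b' : {ffun 'I_m -> int}) :
  injective b' -> (forall k, b' k \in codom b) -> weyl_step (a, b) (a, b').
Proof.
move=> inj_b' b'_in.
have f_inj : injective (fun k => iinv (b'_in k)).
  by move=> k1 k2 /(congr1 b); rewrite !f_iinv => /inj_b'.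
have -> : b' = [ffun k => b (perm f_inj k)].
  by apply/ffunP => k; rewrite ffunE permE f_iinv.
exact: ws_perm_b.
Qed.

Section Walk.

Variables (n m : nat) (S : pred nat).
Hypotheses (n_gt0 : 0 < n) (m_gt0 : 0 < m).
Hypotheses (S_addn : forall x, S x -> S (x + n)) (S_addm : forall x, S x -> S (x + m)).

Definition walk_state t : Zsup n m :=
  ([ffun k : 'I_n => Posz (gap_lift S n t k)], [ffun k : 'I_m => Posz (gap_lift S m t k)]).

Lemma walk_state0 : walk_state 0 = Lambda1 n m.
Proof. by []. Qed.

Lemma walk_state_step t : in_weyl_orbit (walk_state t.+1) (walk_state t).
Proof.
case St: (S t).
  have -> : walk_state t.+1 = walk_state t.
    by congr pair; apply/ffunP => k; rewrite !ffunE /= St addn0.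
  exact: rt_refl.
pose i := Ordinal (ltn_pmod t n_gt0); pose j := Ordinal (ltn_pmod t m_gt0).
have lift_i : gap_lift S n t i = t by apply: gap_lift_gap; rewrite ?St.
have lift_j : gap_lift S m t j = t by apply: gap_lift_gap; rewrite ?St.
apply: rt_step; rewrite [X in weyl_step _ X](_ : walk_state t =
  ([ffun k => if k == i then ((walk_state t.+1).1 k - Posz n)%R
              else (walk_state t.+1).1 k],
   [ffun k => if k == j then ((walk_state t.+1).2 k - Posz m)%R
              else (walk_state t.+1).2 k])).
  apply: ws_tau_inv.
  by rewrite !ffunE /= St /= !eqxx lift_i lift_j !PoszD opprD addrACA subrr add0r.
congr pair; apply/ffunP => k; rewrite !ffunE /= St /=.
  have -> : (k == i) = (t %% n == k) by rewrite [RHS]eq_sym.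
  by case: (t %% n == k); rewrite ?PoszD ?addrK ?addr0.
have -> : (k == j) = (t %% m == k) by rewrite [RHS]eq_sym.
by case: (t %% m == k); rewrite ?PoszD ?addrK ?addr0.
Qed.

Lemma walk_to_Lambda1 t : in_weyl_orbit (walk_state t) (Lambda1 n m).
Proof.
rewrite -walk_state0; elim: t => [|t IHt]; first exact: rt_refl.
exact: @rt_trans _ _ _ (walk_state t) _ (walk_state_step t) IHt.
Qed.

End Walk.

Lemma gap_lift_semigroup2 S p q t r :
  0 < p -> 0 < q -> coprime p q -> S =1 in_semigroup2 p q -> r < p -> q * p <= t ->
  exists2 j, j < p & gap_lift S p t r = q * j.
Proof.
move=> p_gt0 q_gt0 co_pq eqS lt_rp le_t.
apply: apery_semigroup2 => //.
have S_addp x : S x -> S (x + p) by rewrite !eqS; apply: in_semigroup2_addl.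
have le_pt : p <= t by apply: leq_trans (leq_pmull p q_gt0) le_t.
have S_large x : t - p <= x -> S x.
  by move=> le_x; rewrite eqS in_semigroup2_large // mulnBl mul1n; lia.
by have := gap_lift_apery p_gt0 S_addp lt_rp le_pt S_large; rewrite /apery !eqS.
Qed.

Lemma Lambda0_to_walk_state n m t :
  0 < n -> 0 < m -> coprime m n -> m * n <= t ->
  in_weyl_orbit (Lambda0 n m) (walk_state n m (in_semigroup2 n m) t).
Proof.
move=> n_gt0 m_gt0 co_mn le_mn_t; set S := in_semigroup2 n m.
have S_addn x : S x -> S (x + n) by apply: in_semigroup2_addl.
have S_addm x : S x -> S (x + m) by apply: in_semigroup2_addr.
have co_nm : coprime n m by rewrite coprime_sym.
have le_nm_t : n * m <= t by rewrite mulnC.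
rewrite /in_weyl_orbit /Lambda0 /walk_state.
apply: (@rt_trans _ _ _
  ([ffun k : 'I_n => Posz (gap_lift S n t k)], [ffun k : 'I_m => Posz (n * k)])).
all: apply: rt_step.
  apply: weyl_step_perm_a => [k1 k2|k].
    by rewrite !ffunE => -[] /(gap_lift_inj n_gt0 S_addn).
  rewrite ffunE; have [j lt_jn ->] :=
    gap_lift_semigroup2 n_gt0 m_gt0 co_nm (frefl S) (ltn_ord k) le_mn_t.
  apply/codomP; exists (rev_ord (Ordinal lt_jn)); rewrite !ffunE /=.
  by congr (Posz (_ * _)); lia.
apply: weyl_step_perm_b => [k1 k2|k].
  by rewrite !ffunE => -[] /(gap_lift_inj m_gt0 S_addm).
rewrite ffunE; have [j lt_jm ->] :=
  gap_lift_semigroup2 m_gt0 n_gt0 co_mn (in_semigroup2C n_gt0 m_gt0) (ltn_ord k) le_nm_t.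
by apply/codomP; exists (Ordinal lt_jm); rewrite !ffunE.
Qed.

Theorem corollary6p5 (n m : nat) :
  (0 < n)%N -> (n < m)%N -> coprime m n ->
  in_weyl_orbit (Lambda0 n m) (Lambda1 n m).
Proof.
move=> n_gt0 lt_nm co_mn; have m_gt0 : 0 < m by apply: leq_ltn_trans lt_nm.
apply: (@rt_trans _ _ _ _ _ (Lambda0_to_walk_state n_gt0 m_gt0 co_mn (leqnn (m * n)))).
apply: walk_to_Lambda1 => //; [exact: in_semigroup2_addl | exact: in_semigroup2_addr].
Qed.
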